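(* Let $\mathsf{C}\subset V$ be a polyhedral proper cone, $\phi$ in the interior of $\mathsf{C}^*$, $K_\phi=\mathsf{C}\cap\phi^{-1}(1)$, and $k\ge1$. For each facet $F$ of $K_\phi$ choose $x_F$ in the relative interior of $F$, and set $\omega_k=\sum_{F\in\mathcal F(K_\phi)}x_F^{\otimes k}\otimes\psi_F\in V^{\otimes k}\otimes V^*$. The following are equivalent: (i) $\omega_k$ lies in the interior of $\mathsf{C}^{\otimes_{\max}k}\otimes_{\max}\mathsf{C}^*$; (ii) for every vertex $x\in\mathcal V(K_\phi)$, $\mathrm{card}(\mathrm{Av}(x))>k$.
   Context: Proper cone: closed convex cone in a finite-dimensional real vector space, containing no line, not contained in a hyperplane; $\mathsf{C}^*$ is its dual cone; $\mathsf{C}_1\otimes_{\max}\mathsf{C}_2=\{z:(f\otimes g)(z)\ge0\ \forall f\in\mathsf{C}_1^*,g\in\mathsf{C}_2^*\}$, iterated. $\mathcal V(P)$ and $\mathcal F(P)$ are the vertex set and facet set of a polytope $P$. For each facet $F$, $\psi_F\in\mathsf{C}^*$ is a linear form with $F=K_\phi\cap\ker\psi_F$. The avoiding set of a vertex $x$ is $\mathrm{Av}(x)=\{F\in\mathcal F(K_\phi):x\notin F\}$. *)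

(* R : realType; a finite-dimensional real vector space is
   modelled as I -> R for a finite index type I (coordinates in a basis),
   its dual also as I -> R via the standard pairing. *)
From HB Require Import structures.
From mathcomp Require Import all_boot all_order all_algebra.
From mathcomp Require Import boolp reals.
Set Implicit Arguments. Unset Strict Implicit. Unset Printing Implicit Defensive.
Import Order.TTheory GRing.Theory Num.Theory.
Local Open Scope ring_scope.

Section Defs.
Variable R : realType.

Definition pair (J : finType) (f x : J -> R) : R := \sum_(j : J) f j * x j.

Definition dual_cone (J : finType) (C : (J -> R) -> Prop) : (J -> R) -> Prop :=
  fun f => forall x, C x -> 0 <= pair f x.

(* interior w.r.t. the (sup-norm, equivalently Euclidean) topology *)
Definition interior_of (J : finType) (S : (J -> R) -> Prop) (x : J -> R) : Prop :=
  exists2 e : R, 0 < e & forall y, (forall j, `|y j - x j| < e) -> S y.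

Definition closed_set (J : finType) (S : (J -> R) -> Prop) : Prop :=
  forall x, (forall e : R, 0 < e -> exists y, S y /\ forall j, `|y j - x j| < e) -> S x.

(* proper cone: closed convex cone, no line, not contained in a hyperplane *)
Definition proper_cone (J : finType) (C : (J -> R) -> Prop) : Prop :=
  C (fun _ => 0) /\
  [/\ (forall x y, C x -> C y -> C (fun j => x j + y j)),
      (forall t x, 0 <= t -> C x -> C (fun j => t * x j)),
      closed_set C,
      (forall x, C x -> C (fun j => - x j) -> forall j, x j = 0) &
      (forall f, (forall x, C x -> pair f x = 0) -> forall j, f j = 0)].

Definition polyhedral (J : finType) (C : (J -> R) -> Prop) : Prop :=
  exists (m : nat) (a : 'I_m -> J -> R), forall x, C x <-> forall l, 0 <= pair (a l) x.

Definition max_tensor (J1 J2 : finType) (C1 : (J1 -> R) -> Prop)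
  (C2 : (J2 -> R) -> Prop) : ((J1 * J2)%type -> R) -> Prop :=
  fun z => forall f g, dual_cone C1 f -> dual_cone C2 g ->
    0 <= \sum_(p : (J1 * J2)%type) f p.1 * g p.2 * z p.

End Defs.

(* index type of V^{(k+1) tensor}: tidx I k *)
Fixpoint tidx (I : finType) (k : nat) : finType :=
  match k with 0 => I | k'.+1 => (tidx I k' * I)%type end.

Section Tensors.
Variable R : realType.
Variable I : finType.

(* x^{(k+1) tensor} *)
Fixpoint tpowv (k : nat) (x : I -> R) : tidx I k -> R :=
  match k return tidx I k -> R with
  | 0 => x
  | k'.+1 => fun p => @tpowv k' x p.1 * x p.2
  end.

(* iterated max tensor power C^{(k+1) max-tensor} *)
Fixpoint tpowC (k : nat) (C : (I -> R) -> Prop) : (tidx I k -> R) -> Prop :=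
  match k return (tidx I k -> R) -> Prop with
  | 0 => C
  | k'.+1 => max_tensor (@tpowC k' C) C
  end.


Definition comb (t : R) (x y : I -> R) : I -> R := fun i => t * x i + (1 - t) * y i.

Definition convex_set (S : (I -> R) -> Prop) : Prop :=
  forall x y t, S x -> S y -> 0 <= t <= 1 -> S (comb t x y).

Definition is_face (K F : (I -> R) -> Prop) : Prop :=
  [/\ convex_set F, (forall x, F x -> K x) &
      forall x y t, K x -> K y -> 0 < t < 1 -> F (comb t x y) -> F x /\ F y].

Definition is_facet (K F : (I -> R) -> Prop) : Prop :=
  [/\ is_face K F, (exists x, F x), (exists x, K x /\ ~ F x) &
      forall G, is_face K G -> (forall x, F x -> G x) ->
        (exists x, K x /\ ~ G x) -> forall x, G x -> F x].

Definition is_vertex (K : (I -> R) -> Prop) (x : I -> R) : Prop :=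
  is_face K (fun y => y = x).

Definition aff_hull (F : (I -> R) -> Prop) (y : I -> R) : Prop :=
  exists (m : nat) (p : 'I_m -> I -> R) (c : 'I_m -> R),
    [/\ forall l, F (p l), \sum_l c l = 1 & forall i, y i = \sum_l c l * p l i].

Definition relint (F : (I -> R) -> Prop) (x : I -> R) : Prop :=
  F x /\ exists2 e : R, 0 < e &
    forall y, aff_hull F y -> (forall i, `|y i - x i| < e) -> F y.

Definition slice (C : (I -> R) -> Prop) (phi : I -> R) : (I -> R) -> Prop :=
  fun x => C x /\ pair phi x = 1.

End Tensors.

Arguments tpowv {R I} k x.
Arguments tpowC {R I} k C.

(* (i) -> (ii): if at most k facets avoid a point x of K_phi, the tensor
   product of their forms psi_F, padded with phi, is a nonzero F in the dual of
   C^(x)k, and F (x) x is a nonzero element of the dual of C^(x)k (x)max C^*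
   orthogonal to omega_k: in every term <F, x_F^(x)k> psi_F(x) one factor
   vanishes.  An interior point pairs positively with such an element.

   (ii) -> (i): write C = {y | <a_i, y> >= 0}.  By Farkas' lemma the dual of
   C^(x)k is generated by the products a_i1 (x) ... (x) a_ik, and pairing one of
   them and g in C with omega_k gives sum_F (prod_r <a_ir, x_F>) psi_F(g).  A
   nonzero form of C^* vanishes at x_F for at most one facet F (its zero set on
   K_phi is a face), so at a vertex avoided by more than k facets some term is
   positive.  A linear form positive at the finitely many vertices of K_phi is
   bounded below on K_phi, since it can only decrease while walking to a
   vertex; this uniform margin survives small perturbations of omega_k. *)

From HB Require Import structures.
From mathcomp Require Import all_boot all_order all_algebra.
From mathcomp Require Import boolp reals ring lra.
Import Order.TTheory GRing.Theory Num.Theory.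
Local Open Scope ring_scope.
Set Implicit Arguments. Unset Strict Implicit. Unset Printing Implicit Defensive.

Section Pairing.
Variable R : realType.

Lemma pairC (J : finType) (f x : J -> R) : pair f x = pair x f.
Proof. by apply: eq_bigr => j _; rewrite mulrC. Qed.

Lemma pairD (J : finType) (f x y : J -> R) :
  pair f (fun j => x j + y j) = pair f x + pair f y.
Proof. by rewrite /pair -big_split; apply: eq_bigr => j _; rewrite mulrDr. Qed.

Lemma pairZ (J : finType) (f x : J -> R) (t : R) :
  pair f (fun j => t * x j) = t * pair f x.
Proof. by rewrite /pair mulr_sumr; apply: eq_bigr => j _; rewrite mulrCA. Qed.

Lemma pairZl (J : finType) (f x : J -> R) (t : R) :
  pair (fun j => t * f j) x = t * pair f x.
Proof. by rewrite pairC pairZ pairC. Qed.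

Lemma pairN (J : finType) (f x : J -> R) : pair f (fun j => - x j) = - pair f x.
Proof. by rewrite -sumrN; apply: eq_bigr => j _; rewrite mulrN. Qed.

Lemma pairB (J : finType) (f x y : J -> R) :
  pair f (fun j => x j - y j) = pair f x - pair f y.
Proof. by rewrite /pair -sumrB; apply: eq_bigr => j _; rewrite mulrBr. Qed.

Lemma pair_comb (J : finType) (f x y : J -> R) t :
  pair f (comb t x y) = t * pair f x + (1 - t) * pair f y.
Proof. by rewrite /comb (pairD f (fun j => t * x j)) !pairZ. Qed.

Lemma pair_suml (J X : finType) (lam : X -> R) (b : X -> J -> R) z :
  pair (fun j => \sum_x lam x * b x j) z = \sum_x lam x * pair (b x) z.
Proof.
rewrite /pair; under eq_bigr do rewrite mulr_suml.
rewrite exchange_big; apply: eq_bigr => x _; rewrite mulr_sumr.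
by apply: eq_bigr => j _; rewrite mulrA.
Qed.

Lemma pair_sumr (J X : finType) (h : X -> J -> R) f :
  pair f (fun j => \sum_x h x j) = \sum_x pair f (h x).
Proof.
rewrite /pair; under eq_bigr do rewrite mulr_sumr.
by rewrite exchange_big.
Qed.

Lemma pair_eq0 (J : finType) (f x : J -> R) : (forall j, f j = 0) -> pair f x = 0.
Proof. by move=> f0; rewrite /pair big1 // => j _; rewrite f0 mul0r. Qed.

Lemma pair_neq0 (J : finType) (f x : J -> R) : pair f x != 0 -> exists j, x j != 0.
Proof.
apply: contraNP => /forallNP x0; rewrite pairC pair_eq0 // => j.
exact/eqP/negPn/negP/x0.
Qed.

Lemma pair_self_gt0 (J : finType) (f : J -> R) j0 : f j0 != 0 -> 0 < pair f f.
Proof.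
move=> nz; rewrite /pair (bigD1 j0) //= ltr_pwDl ?mulf_gt0 -?expr2 ?exprn_even_gt0 //.
by apply: sumr_ge0 => j _; rewrite -expr2 sqr_ge0.
Qed.

Lemma sum_prod (J1 J2 : finType) (F : (J1 * J2)%type -> R) :
  \sum_p F p = \sum_j1 \sum_j2 F (j1, j2).
Proof. by rewrite pair_bigA; apply: eq_bigr => -[]. Qed.

Definition tprod (J1 J2 : finType) (u : J1 -> R) (v : J2 -> R) : (J1 * J2)%type -> R :=
  fun p => u p.1 * v p.2.

Lemma pair_tprod (J1 J2 : finType) (f u : J1 -> R) (g v : J2 -> R) :
  pair (tprod f g) (tprod u v) = pair f u * pair g v.
Proof.
rewrite /pair sum_prod mulr_suml; apply: eq_bigr => j1 _.
by rewrite mulr_sumr; apply: eq_bigr => j2 _; rewrite /tprod /=; ring.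
Qed.

Lemma pair_tprod_suml (J1 J2 X : finType) (lam : X -> R) (h : X -> J1 -> R)
    (g : J2 -> R) z :
  pair (tprod (fun j => \sum_x lam x * h x j) g) z
  = \sum_x lam x * pair (tprod (h x) g) z.
Proof.
rewrite -pair_suml; apply: eq_bigr => p _; congr (_ * _).
by rewrite /tprod mulr_suml; apply: eq_bigr => x _; rewrite mulrA.
Qed.

Lemma pair_tprod_sumr (J1 J2 X : finType) (mu : X -> R) (h : X -> J2 -> R)
    (f : J1 -> R) z :
  pair (tprod f (fun j => \sum_x mu x * h x j)) z
  = \sum_x mu x * pair (tprod f (h x)) z.
Proof.
rewrite -pair_suml; apply: eq_bigr => p _; congr (_ * _).
by rewrite /tprod mulr_sumr; apply: eq_bigr => x _; rewrite mulrCA.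
Qed.

Definition norm1 (J : finType) (u : J -> R) : R := \sum_j `|u j|.

Lemma norm1_ge0 (J : finType) (u : J -> R) : 0 <= norm1 u.
Proof. exact: sumr_ge0. Qed.

Lemma norm1_gt0 (J : finType) (u : J -> R) j0 : u j0 != 0 -> 0 < norm1 u.
Proof.
move=> nz; rewrite /norm1 (bigD1 j0) //= ltr_pwDl ?normr_gt0 //.
exact: sumr_ge0.
Qed.

Lemma norm1_tprod (J1 J2 : finType) (u : J1 -> R) (v : J2 -> R) :
  norm1 (tprod u v) = norm1 u * norm1 v.
Proof.
rewrite /norm1 sum_prod mulr_suml; apply: eq_bigr => j1 _.
by rewrite mulr_sumr; apply: eq_bigr => j2 _; rewrite normrM.
Qed.

Lemma ler_norm_pair (J : finType) (u d : J -> R) e :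
  (forall j, `|d j| <= e) -> `|pair u d| <= e * norm1 u.
Proof.
move=> de; apply: (le_trans (ler_norm_sum _ _ _)).
rewrite /norm1 mulr_sumr; apply: ler_sum => j _.
by rewrite normrM mulrC ler_wpM2r.
Qed.

Lemma exists_small_scale (J : finType) (d : J -> R) e :
  0 < e -> exists2 s : R, 0 < s & forall j, `|s * d j| < e.
Proof.
move=> e0; have n0 := norm1_ge0 d.
exists (e / (1 + norm1 d)) => [|j]; first by rewrite divr_gt0 //; lra.
rewrite normrM gtr0_norm ?divr_gt0 //; last by lra.
rewrite mulrAC ltr_pdivrMr; last by lra.
have dj : `|d j| <= norm1 d by rewrite /norm1 (bigD1 j) //= lerDl sumr_ge0.
by rewrite ltr_pM2l //; lra.
Qed.

Lemma interior_dual_gt0 (J : finType) (S : (J -> R) -> Prop) z f j0 :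
  interior_of S z -> dual_cone S f -> f j0 != 0 -> 0 < pair f z.
Proof.
case=> e e0 Sz Sf nz; have [s s0 small] := exists_small_scale f e0.
have : S (fun j => z j - s * f j).
  by apply: Sz => j; rewrite addrAC subrr add0r normrN.
move=> /Sf; rewrite pairB pairZ subr_ge0 => le_ff.
apply: lt_le_trans le_ff; exact: mulr_gt0 (pair_self_gt0 nz).
Qed.

Lemma fin_uniform (X : finType) (P : X -> R -> Prop) :
  (forall x e e', 0 < e' <= e -> P x e -> P x e') ->
  (forall x, exists2 e, 0 < e & P x e) ->
  exists2 e, 0 < e & forall x, P x e.
Proof.
move=> mono ex; have [E HE] : exists E : X -> R, forall x, 0 < E x /\ P x (E x).
  apply: (@fin_all_exists X (fun _ => R) (fun x e => 0 < e /\ P x e)) => x.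
  by have [e e0 Pe] := ex x; exists e.
have E0 : 0 < \big[Order.min/1]_x E x.
  by elim/big_ind: _ => // [a b a0 b0|x _]; [rewrite lt_min a0 b0 | case: (HE x)].
exists (\big[Order.min/1]_x E x) => // x; case: (HE x) => _ PEx.
by apply: mono PEx; rewrite E0 (bigD1 x) //= ge_min lexx.
Qed.

End Pairing.

Section Farkas.
Variable R : realType.

Definition extend_last N (lam : 'I_N -> R) (c : R) (i : 'I_N.+1) : R :=
  if unlift ord_max i is Some i' then lam i' else c.

Lemma widen_ord_lift N (i : 'I_N) : widen_ord (leqnSn N) i = lift ord_max i.
Proof. by apply: val_inj; rewrite /= /bump leqNgt ltn_ord. Qed.

Lemma extend_last_ge0 N (lam : 'I_N -> R) c :
  (forall i, 0 <= lam i) -> 0 <= c -> forall i, 0 <= extend_last lam c i.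
Proof. by move=> lam0 c0 i; rewrite /extend_last; case: unliftP. Qed.

Lemma sum_extend_last N (lam : 'I_N -> R) c (F : 'I_N.+1 -> R) :
  \sum_i extend_last lam c i * F i
  = \sum_i lam i * F (widen_ord (leqnSn N) i) + c * F ord_max.
Proof.
rewrite big_ord_recr /extend_last unlift_none; congr (_ + _).
by apply: eq_bigr => i _; rewrite widen_ord_lift liftK.
Qed.

Lemma ord_max_split N (P : 'I_N.+1 -> Prop) :
  (forall i : 'I_N, P (widen_ord (leqnSn N) i)) -> P ord_max -> forall i, P i.
Proof.
by move=> Pw Pm i; case: (unliftP ord_max i) => [j ->|->] //; rewrite -widen_ord_lift.
Qed.

Lemma farkas0 (J : finType) (b : 'I_0 -> J -> R) (f : J -> R) :
  (exists2 lam : 'I_0 -> R, (forall i, 0 <= lam i) &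
      forall j, f j = \sum_i lam i * b i j)
  \/ (exists z, (forall i, 0 <= pair (b i) z) /\ pair f z < 0).
Proof.
have [f0|/existsNP[j0 /eqP fj0]] := pselect (forall j, f j = 0).
  by left; exists (fun _ => 0) => // j; rewrite big_ord0 f0.
right; exists (fun j => - f j); split; first by case.
by rewrite pairN oppr_lt0 (pair_self_gt0 fj0).
Qed.

Lemma farkas (J : finType) (N : nat) (b : 'I_N -> J -> R) (f : J -> R) :
  (exists2 lam : 'I_N -> R, (forall i, 0 <= lam i) &
      forall j, f j = \sum_i lam i * b i j)
  \/ (exists z, (forall i, 0 <= pair (b i) z) /\ pair f z < 0).
Proof.
elim: N b f => [|N IH] b f; first exact: farkas0.
pose b' i := b (widen_ord (leqnSn N) i); pose bN := b ord_max.
have [[lam lam0 Hf]|[z [bz fz]]] := IH b' f.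
  left; exists (extend_last lam 0); first exact: extend_last_ge0.
  by move=> j; rewrite sum_extend_last mul0r addr0 Hf.
have [bNz|bNz] := lerP 0 (pair bN z).
  by right; exists z; split => //; apply: ord_max_split.
(* [proj u] corrects [u] by a multiple of [bN] so that it vanishes at [z]. *)
pose proj (u : J -> R) j := u j - (pair u z / pair bN z) * bN j.
have pair_proj u w : pair (proj u) w = pair u w - pair u z / pair bN z * pair bN w.
  by rewrite pairC (pairB w u) pairZ !(pairC w).
have [[mu mu0 Hf]|[w [bw fw]]] := IH (fun i => proj (b' i)) (proj f).
  left; pose c := (pair f z - \sum_i mu i * pair (b' i) z) / pair bN z.
  have c0 : 0 <= c.
    rewrite /c ler_ndivlMr // mul0r subr_le0; apply: ltW.
    by apply: (lt_le_trans fz); apply: sumr_ge0 => i _; exact: mulr_ge0.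
  exists (extend_last mu c); first exact: extend_last_ge0.
  move=> j; rewrite sum_extend_last.
  have -> : f j = proj f j + pair f z / pair bN z * bN j by rewrite /proj subrK.
  have -> : \sum_i mu i * b' i j = \sum_i mu i * proj (b' i) j
      + (\sum_i mu i * pair (b' i) z) / pair bN z * bN j.
    rewrite !mulr_suml -big_split /=; apply: eq_bigr => i _; rewrite /proj; ring.
  rewrite Hf /c /bN; have : pair (b ord_max) z != 0 by rewrite lt_eqF.
  by move=> ?; field.
right; exists (fun j => w j - (pair bN w / pair bN z) * z j); split.
  apply: ord_max_split => [i|].
    by rewrite pairB pairZ; have := bw i; rewrite pair_proj; lra.
  by rewrite pairB pairZ divfK ?subrr // lt_eqF.
by move: fw; rewrite pair_proj pairB pairZ; lra.
Qed.

Lemma dual_cone_generated (J X : finType) (b : X -> J -> R)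
    (D : (J -> R) -> Prop) (f : J -> R) :
  (forall z, (forall x, 0 <= pair (b x) z) -> D z) -> dual_cone D f ->
  exists2 lam : X -> R, (forall x, 0 <= lam x) &
    forall j, f j = \sum_x lam x * b x j.
Proof.
move=> genD Df.
have [[lam lam0 Hf]|[z [bz fz]]] :=
  farkas (fun i : 'I_#|X| => b (enum_val i)) f; last first.
  have /Df : D z by apply: genD => x; rewrite -(enum_rankK x).
  by rewrite leNgt fz.
exists (fun x => lam (enum_rank x)) => // j; rewrite Hf (reindex (@enum_rank X)) /=.
  by apply: eq_bigr => x _; rewrite enum_rankK.
by exists enum_val => x _; rewrite ?enum_valK ?enum_rankK.
Qed.

End Farkas.

Section MaxTensor.
Variable R : realType.

Lemma interior_max_tensor (J1 J2 X : finType) (D1 : (J1 -> R) -> Prop)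
    (D2 : (J2 -> R) -> Prop) (h : X -> J1 -> R) (z : (J1 * J2)%type -> R) e :
  0 < e ->
  (forall f, dual_cone D1 f -> exists2 lam : X -> R, (forall x, 0 <= lam x) &
     forall p, f p = \sum_x lam x * h x p) ->
  (forall x g, dual_cone D2 g -> e * (norm1 (h x) * norm1 g) <= pair (tprod (h x) g) z) ->
  interior_of (max_tensor D1 D2) z.
Proof.
move=> e0 genD1 z_pos; exists e => // y yz f g /genD1[lam lam0 f_eq] D2g.
have -> : f = (fun p => \sum_x lam x * h x p) by apply: funext.
change (0 <= pair (tprod (fun p => \sum_x lam x * h x p) g) y).
rewrite pair_tprod_suml; apply: sumr_ge0 => x _; apply: mulr_ge0 => //.
have -> : y = (fun p => z p + (y p - z p)) by apply: funext => p; rewrite addrC subrK.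
rewrite pairD; have := z_pos x g D2g.
have /lerNnormlW : `|pair (tprod (h x) g) (fun p => y p - z p)|
    <= e * (norm1 (h x) * norm1 g).
  by rewrite -norm1_tprod; apply: ler_norm_pair => p; apply: ltW.
lra.
Qed.

End MaxTensor.

Section TensorWords.
Variables (R : realType) (X I : finType) (b : X -> I -> R).

Fixpoint letters (j : nat) : tidx X j -> seq X :=
  match j return tidx X j -> seq X with
  | 0 => fun c => [:: c]
  | j'.+1 => fun c => c.2 :: letters c.1
  end.

Fixpoint tensor_word (j : nat) : tidx X j -> tidx I j -> R :=
  match j return tidx X j -> tidx I j -> R with
  | 0 => b
  | j'.+1 => fun c => tprod (tensor_word c.1) (b c.2)
  end.

Lemma size_letters j (c : tidx X j) : size (letters c) = j.+1.
Proof. by elim: j c => [|j IH] c //=; rewrite IH. Qed.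

Lemma pair_tensor_word_tpowv j (c : tidx X j) y :
  pair (tensor_word c) (tpowv j y) = \prod_(x <- letters c) pair (b x) y.
Proof.
elim: j c => [|j IH] c /=; first by rewrite big_seq1.
by rewrite (pair_tprod _ (tpowv j y)) IH big_cons mulrC.
Qed.

Lemma tensor_word_dual (C : (I -> R) -> Prop) j (c : tidx X j) :
  (forall x, dual_cone C (b x)) -> dual_cone (tpowC j C) (tensor_word c).
Proof.
move=> bC; elim: j c => [|j IH] c; first exact: bC.
by move=> z Tz; apply: Tz; [exact: IH | exact: bC].
Qed.

Lemma tensor_word_neq0 j (c : tidx X j) :
  (forall x, exists i, b x i != 0) -> exists p, tensor_word c p != 0.
Proof.
move=> bnz; elim: j c => [|j IH] c; first exact: bnz.
have [p wp] := IH c.1; have [i bi] := bnz c.2.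
by exists (p, i); apply: mulf_neq0.
Qed.

Lemma exists_word_covering (x0 : X) j (L : {set X}) :
  (#|L| <= j.+1)%N -> exists c : tidx X j, {subset L <= letters c}.
Proof.
elim: j L => [|j IH] L cardL.
  have [->|[x xL]] := set_0Vmem L; first by exists x0 => y; rewrite inE.
  exists x => y yL /=; rewrite inE; apply/eqP.
  by move/card_le1_eqP: cardL; apply.
have [->|[x xL]] := set_0Vmem L.
  have [c _] : exists c : tidx X j, {subset set0 <= letters c} by apply: IH; rewrite cards0.
  by exists (c, x0) => y; rewrite inE.
have [c Lc] : exists c : tidx X j, {subset L :\ x <= letters c}.
  by apply: IH; move: cardL; rewrite (cardsD1 x L) xL.
exists (c, x) => y yL /=; rewrite inE.
by have [//|yx] := eqVneq y x; rewrite Lc // !inE yx.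
Qed.

End TensorWords.
Arguments tensor_word {R X I} b {j} _ _.

Section Faces.
Variables (R : realType) (I : finType).
Implicit Types (K F : (I -> R) -> Prop) (b x y : I -> R).

Lemma vertex_in K x : is_vertex K x -> K x.
Proof. by case=> _ Kx _; exact: Kx. Qed.

Lemma face_ker K b :
  convex_set K -> (forall y, K y -> 0 <= pair b y) ->
  is_face K (fun y => K y /\ pair b y = 0).
Proof.
move=> convK bK; split.
- move=> x y t [Kx bx] [Ky b_y] t01; split; first exact: convK.
  by rewrite pair_comb bx b_y; ring.
- by move=> x [].
move=> x y t Kx Ky /andP[t0 t1] [_]; rewrite pair_comb => /eqP.
have bx := bK x Kx; have b_y := bK y Ky.
rewrite paddr_eq0 ?mulr_ge0 ?subr_ge0 ?(ltW t0) ?(ltW t1) // !mulf_eq0 subr_eq0.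
by rewrite (gt_eqF t0) (gt_eqF t1) /= => /andP[/eqP ? /eqP ?].
Qed.

Lemma relint_pair_eq0 F b x y :
  (forall y, F y -> 0 <= pair b y) -> relint F x -> pair b x = 0 ->
  F y -> pair b y = 0.
Proof.
move=> bF [Fx [e e0 relF]] bx Fy.
have [s s0 small] := exists_small_scale (fun i => x i - y i) e0.
pose y' i := x i + s * (x i - y i).
have Fy' : F y'.
  apply: relF => [|i]; last by rewrite /y' addrAC subrr add0r.
  exists 2%N, (fun l : 'I_2 => if val l == 0%N then x else y),
    (fun l : 'I_2 => if val l == 0%N then 1 + s else - s).
  split=> [l||i]; first by case: (val l == 0%N).
    by rewrite big_ord_recr big_ord1 /=; ring.
  by rewrite big_ord_recr big_ord1 /= /y'; ring.
have := bF _ Fy'; have := bF _ Fy.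
rewrite /y' pairD pairZ pairB bx; nra.
Qed.

End Faces.

Section Slice.
Variables (R : realType) (I : finType) (C : (I -> R) -> Prop) (phi : I -> R).
Hypothesis Cproper : proper_cone C.
Hypothesis phi_int : interior_of (dual_cone C) phi.

Local Notation K := (slice C phi).

Lemma phi_dual : dual_cone C phi.
Proof. by case: phi_int => e e0; apply => j; rewrite subrr normr0. Qed.

Lemma slice_convex : convex_set K.
Proof.
case: Cproper => _ [Cadd Cscale _ _ _] x y t [Cx px] [Cy py] /andP[t0 t1].
split; first by apply: Cadd; apply: Cscale => //; rewrite subr_ge0.
by rewrite pair_comb px py; ring.
Qed.

(* [phi - (e/2) sign(z)] is still in [C^*]. *)
Lemma phi_ge_norm1 : exists2 r : R, 0 < r & forall z, C z -> r * norm1 z <= pair phi z.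
Proof.
case: phi_int => e e0 phiC; exists (e / 2) => [|z Cz]; first by rewrite divr_gt0.
pose s j : R := (-1) ^+ (z j < 0)%R.
have norms j : `|s j| = 1 by rewrite /s; case: (z j < 0)%R; rewrite ?normrN1 ?normr1.
have : dual_cone C (fun j => phi j - e / 2 * s j).
  apply: phiC => j; rewrite addrAC subrr add0r normrN normrM norms mulr1.
  by rewrite ger0_norm ?divr_ge0 ?ltW //; lra.
move=> /(_ z Cz); rewrite pairC pairB pairZ subr_ge0 (pairC z phi).
suff -> : pair z s = norm1 z by [].
by apply: eq_bigr => j _; rewrite mulrC normrEsign.
Qed.

Lemma C_eq0 z : C z -> pair phi z = 0 -> forall i, z i = 0.
Proof.
move=> Cz pz i; have [r r0 /(_ z Cz)] := phi_ge_norm1.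
rewrite pz pmulr_rle0 // => n0.
have : norm1 z = 0 by apply/eqP; rewrite eq_le n0 norm1_ge0.
by move/psumr_eq0P => /(_ (fun j _ => normr_ge0 (z j)) i isT) /normr0_eq0.
Qed.

Lemma C_slice_cases z : C z ->
  (forall i, z i = 0) \/ 0 < pair phi z /\ K (fun i => (pair phi z)^-1 * z i).
Proof.
move=> Cz; have := phi_dual Cz; rewrite le_eqVlt => /orP[/eqP pz|pz].
  by left; apply: C_eq0.
right; split => //; split; last by rewrite pairZ mulVf ?gt_eqF.
by case: Cproper => _ [_ Cscale _ _ _]; apply: Cscale; rewrite // invr_ge0 ltW.
Qed.

Lemma pair_eq0_on_slice b : (forall x, K x -> pair b x = 0) -> forall i, b i = 0.
Proof.
move=> bK; case: Cproper => _ [_ _ _ _]; apply => z Cz.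
have [z0|[pz Kz]] := C_slice_cases Cz; first by rewrite pairC pair_eq0.
by move: (bK _ Kz); rewrite pairZ => /eqP; rewrite mulf_eq0 invr_eq0 gt_eqF //= => /eqP.
Qed.

End Slice.

Section Polyhedral.
Variables (R : realType) (I Y : finType) (C : (I -> R) -> Prop) (phi : I -> R).
Variable a : Y -> I -> R.
Hypothesis Cproper : proper_cone C.
Hypothesis phi_int : interior_of (dual_cone C) phi.
Hypothesis C_poly : forall x, C x <-> forall y, 0 <= pair (a y) x.

Local Notation K := (slice C phi).

Lemma a_dual y : dual_cone C (a y).
Proof. by move=> z /C_poly. Qed.

Definition tight (g : I -> R) : {set Y} := [set y | pair (a y) g == 0].

Lemma nonvertex_direction g : K g -> ~ is_vertex K g ->
  exists d : I -> R, [/\ exists i, d i != 0, pair phi d = 0 &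
    forall y, y \in tight g -> pair (a y) d = 0].
Proof.
move=> Kg gNv.
have [x [z [t [Kx Kz t01 xzg xzNg]]]] : exists x z t,
    [/\ K x, K z, 0 < t < 1, comb t x z = g & ~ (x = g /\ z = g)].
  apply: contrapT => none; apply: gNv; split=> [x z t -> -> _|x ->//|x z t Kx Kz t01 xzg].
    by apply: funext => i; rewrite /comb; ring.
  by apply: contrapT => xzNg; apply: none; exists x, z, t.
exists (fun i => x i - z i); split.
- apply: contrapT => /forallNP xz0.
  have xz : x = z by apply: funext => i; apply/eqP; rewrite -subr_eq0; exact/negPn/negP/xz0.
  apply: xzNg; suff xg : x = g by rewrite -xz.
  by rewrite -xzg -xz; apply: funext => i; rewrite /comb; ring.
- by rewrite pairB; case: Kx => _ ->; case: Kz => _ ->; rewrite subrr.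
move=> y; rewrite inE => /eqP ayg.
have [_ _ ext] :=
  face_ker (slice_convex (phi := phi) Cproper) (fun w (Kw : K w) => a_dual y (proj1 Kw)).
have := ext x z t Kx Kz t01; rewrite xzg => /(_ (conj Kg ayg)) [[_ ax] [_ az]].
by rewrite pairB ax az subrr.
Qed.

Lemma vertex_no_direction v d : is_vertex K v -> pair phi d = 0 ->
  (forall y, y \in tight v -> pair (a y) d = 0) -> forall i, d i = 0.
Proof.
move=> vv phid tight_d; have Kv := vertex_in vv; have [_ _ ext] := vv.
have av y : 0 <= pair (a y) v by case: Kv => /C_poly.
have [s s0 sd] : exists2 s : R, 0 < s & forall y, s * `|pair (a y) d| <= pair (a y) v.
  apply: (@fin_uniform _ _ (fun y s => s * `|pair (a y) d| <= pair (a y) v)).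
    by move=> y e e' /andP[_ e'e]; apply: le_trans; rewrite ler_wpM2r.
  move=> y; have [ad0|ad0] := eqVneq (pair (a y) d) 0.
    by exists 1; rewrite ?ad0 ?normr0 ?mulr0.
  have av0 : 0 < pair (a y) v.
    rewrite lt_def av andbT; apply: contraNN ad0 => /eqP ay.
    by apply/eqP/tight_d; rewrite inE ay.
  exists (pair (a y) v / `|pair (a y) d|).
    by rewrite divr_gt0 ?normr_gt0.
  by rewrite divfK ?normr_eq0.
have K_pm (u : R) : `|u| <= s -> K (fun i => v i + u * d i).
  move=> us; split; last by rewrite pairD pairZ phid mulr0 addr0; case: Kv.
  apply/C_poly => y; rewrite pairD pairZ.
  have : `|u * pair (a y) d| <= pair (a y) v.
    by rewrite normrM (le_trans _ (sd y)) // ler_wpM2r.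
  by move/lerNnormlW; lra.
have v_mid : comb (1 / 2) (fun i => v i + s * d i) (fun i => v i + - s * d i) = v.
  by apply: funext => i; rewrite /comb; field.
have s_le : `|s| <= s by rewrite gtr0_norm.
have Ns_le : `|- s| <= s by rewrite normrN.
have half01 : 0 < (1 / 2 : R) < 1 by apply/andP; split; lra.
have [vs _] := ext _ _ _ (K_pm s s_le) (K_pm (- s) Ns_le) half01 v_mid.
move=> i; have /= := congr1 (fun f => f i) vs => /eqP.
by rewrite -subr_eq0 addrC addKr mulf_eq0 gt_eqF // => /eqP.
Qed.

Lemma vertex_eq_of_tight v v' :
  is_vertex K v -> is_vertex K v' -> tight v = tight v' -> v = v'.
Proof.
move=> vv vv' tvv'; have [[_ phiv] [_ phiv']] := (vertex_in vv, vertex_in vv').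
apply: funext => i; apply/eqP; rewrite eq_sym -subr_eq0; apply/eqP.
move: i; apply: (vertex_no_direction (d := fun i => v' i - v i) vv).
  by rewrite pairB phiv phiv' subrr.
move=> y yv; have := yv; rewrite tvv' inE => /eqP ay'.
by move: yv; rewrite inE pairB ay' => /eqP ->; rewrite subrr.
Qed.

Lemma tight_step w g d : K g -> (exists i, d i != 0) -> pair phi d = 0 ->
  (forall y, y \in tight g -> pair (a y) d = 0) -> pair w d <= 0 ->
  exists g', [/\ K g', tight g \proper tight g' & pair w g' <= pair w g].
Proof.
move=> Kg [i0 di0] phid tight_d wd.
have [y1 ay1] : exists y, pair (a y) d < 0.
  apply: contrapT => /forallNP ad; move/eqP: di0; apply.
  have Cd : C d by apply/C_poly => y; rewrite leNgt; apply/negP; exact: ad.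
  exact: (C_eq0 phi_int Cd phid).
(* [ratio y0] is the largest step along [d] that stays in [C]. *)
pose ratio y := pair (a y) g / - pair (a y) d.
have [y0 ay0 ratio_min] := arg_minP (P := [pred y | pair (a y) d < 0]) ratio ay1.
have ag y : 0 <= pair (a y) g by case: Kg => /C_poly.
have st0 : 0 <= ratio y0 by rewrite divr_ge0 // oppr_ge0 ltW.
exists (fun i => g i + ratio y0 * d i); split.
- split; last by rewrite pairD pairZ phid mulr0 addr0; case: Kg.
  apply/C_poly => y; rewrite pairD pairZ.
  have [ayd|ayd] := ltrP (pair (a y) d) 0; last exact: addr_ge0 (ag y) (mulr_ge0 st0 ayd).
  have := ratio_min y ayd; rewrite /ratio ler_pdivlMr ?oppr_gt0 // mulrN; lra.
- apply/properP; split.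
    apply/subsetP => y; rewrite !inE => /eqP agy.
    by rewrite pairD pairZ agy tight_d ?inE ?agy // mulr0 addr0.
  exists y0.
    by rewrite inE pairD pairZ /ratio; apply/eqP; field; rewrite lt_eqF.
  by apply/negP => /tight_d ad0; move: ay0; rewrite inE ad0 ltxx.
by rewrite pairD pairZ gerDl mulr_ge0_le0.
Qed.

Lemma vertex_below w g : K g -> exists2 v, is_vertex K v & pair w v <= pair w g.
Proof.
have [n] := ubnP #|~: tight g|; elim: n g => // n IH g card_g Kg.
have [gv|gNv] := pselect (is_vertex K g); first by exists g.
have [d [dnz phid tight_d]] := nonvertex_direction Kg gNv.
have [d' [d'nz phid' tight_d' wd']] : exists d', [/\ exists i, d' i != 0, pair phi d' = 0,
    forall y, y \in tight g -> pair (a y) d' = 0 & pair w d' <= 0].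
  have [wd|wd] := lerP (pair w d) 0; first by exists d.
  exists (fun i => - d i); split; rewrite ?pairN ?phid ?oppr0 ?oppr_le0 ?ltW //.
    by have [i di] := dnz; exists i; rewrite oppr_eq0.
  by move=> y /tight_d; rewrite pairN => ->; rewrite oppr0.
have [g' [Kg' tight_lt wg']] := tight_step Kg d'nz phid' tight_d' wd'.
have [|v vv wv] := IH g' _ Kg'.
  by rewrite -ltnS (leq_trans _ card_g) // ltnS proper_card // properC.
by exists v => //; exact: le_trans wv wg'.
Qed.

Lemma uniform_vertex_bound (X : finType) (w : X -> I -> R) :
  (forall x v, is_vertex K v -> 0 < pair (w x) v) ->
  exists2 e, 0 < e & forall x g, K g -> e <= pair (w x) g.
Proof.
move=> w_pos.
have [e e0 e_vert] : exists2 e, 0 < e & forall (Sx : {set Y} * X) v,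
    is_vertex K v -> tight v = Sx.1 -> e <= pair (w Sx.2) v.
  apply: (@fin_uniform _ _ (fun Sx e => forall v,
    is_vertex K v -> tight v = Sx.1 -> e <= pair (w Sx.2) v)).
    by move=> Sx e e' /andP[_ e'e] ev v vv tv; exact: le_trans e'e (ev v vv tv).
  move=> [S x].
  have [[v0 [v0v tv0]]|none] := pselect (exists v, is_vertex K v /\ tight v = S).
    exists (pair (w x) v0); first exact: w_pos.
    by move=> v vv /= tv; rewrite (vertex_eq_of_tight vv v0v) // tv tv0.
  by exists 1 => // v vv tv; case: none; exists v.
exists e => // x g Kg; have [v vv wv] := vertex_below (w x) Kg.
exact: le_trans (e_vert (tight v, x) v vv erefl) wv.
Qed.

Lemma tpowC_words j z : tpowC j C z <-> forall c : tidx Y j, 0 <= pair (tensor_word a c) z.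
Proof.
split=> [Tz c|]; first exact: (tensor_word_dual c a_dual).
elim: j z => [|j IH] z words; first exact/C_poly.
move=> f g /(dual_cone_generated IH)[lam lam0 f_eq].
move=> /(dual_cone_generated (fun x => proj2 (C_poly x)))[mu mu0 g_eq].
have -> : f = (fun p => \sum_c lam c * tensor_word a c p) by apply: funext.
have -> : g = (fun i => \sum_y mu y * a y i) by apply: funext.
change (0 <= pair (tprod (fun p => \sum_c lam c * tensor_word a c p)
  (fun i => \sum_y mu y * a y i)) z).
rewrite pair_tprod_suml; apply: sumr_ge0 => c _; apply: mulr_ge0 => //.
rewrite pair_tprod_sumr; apply: sumr_ge0 => y _; apply: mulr_ge0 => //.
exact: (words (c, y)).
Qed.

Lemma dual_tpowC_words j f : dual_cone (tpowC j C) f ->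
  exists2 lam : tidx Y j -> R, (forall c, 0 <= lam c) &
    forall p, f p = \sum_c lam c * tensor_word a c p.
Proof. by apply: dual_cone_generated => z /tpowC_words. Qed.

End Polyhedral.

Lemma polyhedral_neq0 (R : realType) (I : finType) (C : (I -> R) -> Prop) :
  polyhedral C -> exists (Y : finType) (a : Y -> I -> R),
    (forall y, exists i, a y i != 0) /\ forall x, C x <-> forall y, 0 <= pair (a y) x.
Proof.
move=> [M [a C_poly]].
exists {l : 'I_M | [exists i, a l i != 0]}, (fun y => a (val y)); split.
  by move=> [l /= /existsP].
move=> x; rewrite C_poly; split=> [ax y|ax l]; first exact: ax.
have [anz|/existsPn a0] := boolP [exists i, a l i != 0]; first exact: (ax (exist _ l anz)).
by rewrite pair_eq0 // => i; apply/eqP/negbNE/a0.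
Qed.

Section Facets.
Variables (R : realType) (I : finType) (C : (I -> R) -> Prop) (phi : I -> R).
Variables (m : nat) (Fs : 'I_m -> (I -> R) -> Prop) (xF psi : 'I_m -> I -> R).
Variables (Y : finType) (a : Y -> I -> R).
Hypothesis Cproper : proper_cone C.
Hypothesis phi_int : interior_of (dual_cone C) phi.
Hypothesis C_poly : forall x, C x <-> forall y, 0 <= pair (a y) x.
Hypothesis a_neq0 : forall y, exists i, a y i != 0.
Hypothesis Fs_facet : forall l, is_facet (slice C phi) (Fs l).
Hypothesis Fs_inj : forall l l', (forall y, Fs l y <-> Fs l' y) -> l = l'.
Hypothesis xF_relint : forall l, relint (Fs l) (xF l).
Hypothesis psi_dual : forall l, dual_cone C (psi l).
Hypothesis Fs_ker : forall l y, Fs l y <-> slice C phi y /\ pair (psi l) y = 0.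

Local Notation K := (slice C phi).

Definition avoiding (x : I -> R) : {set 'I_m} := [set l | `[< ~ Fs l x >]].

(* [omega j] is the paper's omega_(j+1): [tidx I j] indexes the (j+1)-fold
   tensor power. *)
Definition omega (j : nat) : (tidx I j * I)%type -> R :=
  fun p => \sum_l tpowv j (xF l) p.1 * psi l p.2.
Arguments omega : clear implicits.

Definition facet_form (X : finType) (b : X -> I -> R) (s : seq X) : I -> R :=
  fun i => \sum_l (\prod_(x <- s) pair (b x) (xF l)) * psi l i.

Lemma xF_slice l : K (xF l).
Proof. by case: (xF_relint l) => /Fs_ker[]. Qed.

Lemma psi_neq0 l : exists i, psi l i != 0.
Proof.
apply/not_existsP => psi0; have [_ _ [x [Kx nFx]] _] := Fs_facet l; apply: nFx.
apply/Fs_ker; split; rewrite // pair_eq0 // => i.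
exact/eqP/negPn/negP/psi0.
Qed.

(* [b] cuts out a proper face of [K]; a facet through [xF l] must be that face. *)
Lemma xF_ker_uniq b l l' : dual_cone C b -> (exists i, b i != 0) ->
  pair b (xF l) = 0 -> pair b (xF l') = 0 -> l = l'.
Proof.
move=> bC [i0 bi0] bl bl'.
have bK y : K y -> 0 <= pair b y by case=> Cy _; exact: bC.
have face := face_ker (slice_convex Cproper) bK.
have proper : exists x, K x /\ ~ (K x /\ pair b x = 0).
  apply/not_existsP => bK0; move/eqP: bi0; apply.
  apply: (pair_eq0_on_slice Cproper phi_int) => x Kx.
  by apply: contrapT => bx; apply: (bK0 x); split => // -[].
have Fs_sub l1 : pair b (xF l1) = 0 -> forall y, Fs l1 y -> K y /\ pair b y = 0.
  move=> bl1 y Fy; split; first by case/Fs_ker: Fy.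
  by apply: (relint_pair_eq0 _ (xF_relint l1) bl1 Fy) => z /Fs_ker[/bK].
have sub_Fs l1 : pair b (xF l1) = 0 -> forall y, K y /\ pair b y = 0 -> Fs l1 y.
  by move=> bl1; have [_ _ _ max] := Fs_facet l1; apply: max face (Fs_sub l1 bl1) proper.
apply: Fs_inj => y; split=> Fy; first exact: (sub_Fs l' bl' y (Fs_sub l bl y Fy)).
exact: (sub_Fs l bl y (Fs_sub l' bl' y Fy)).
Qed.

Lemma card_xF_prod_eq0 (X : finType) (b : X -> I -> R) (s : seq X) :
  (forall x, dual_cone C (b x)) -> (forall x, exists i, b x i != 0) ->
  (#|[set l | (\prod_(x <- s) pair (b x) (xF l) == 0)%R]| <= size s)%N.
Proof.
move=> bC bnz; elim: s => [|x s IH].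
  by rewrite leqn0 cards_eq0; apply/eqP/setP => l; rewrite !inE big_nil oner_eq0.
have sub : [set l | (\prod_(y <- x :: s) pair (b y) (xF l) == 0)%R] \subset
    [set l | pair (b x) (xF l) == 0]
    :|: [set l | (\prod_(y <- s) pair (b y) (xF l) == 0)%R].
  by apply/subsetP => l; rewrite !inE big_cons mulf_eq0.
apply: (leq_trans (subset_leq_card sub)).
apply: (leq_trans (leq_card_setU _ _)); rewrite /= -add1n leq_add //.
apply/card_le1_eqP => l l'; rewrite !inE => /eqP bl /eqP bl'.
exact: xF_ker_uniq (bC x) (bnz x) bl' bl.
Qed.

Lemma pair_facet_form (X : finType) (b : X -> I -> R) (s : seq X) g :
  pair (facet_form b s) g = \sum_l (\prod_(x <- s) pair (b x) (xF l)) * pair (psi l) g.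
Proof. exact: pair_suml. Qed.

Lemma pair_tprod_omega (X : finType) (b : X -> I -> R) j (c : tidx X j) (g : I -> R) :
  pair (tprod (tensor_word b c) g) (omega j) = pair (facet_form b (letters c)) g.
Proof.
rewrite pair_sumr pair_facet_form; apply: eq_bigr => l _.
by rewrite (pair_tprod _ (tpowv j (xF l))) pair_tensor_word_tpowv pairC.
Qed.

Lemma facet_form_ge0 (X : finType) (b : X -> I -> R) (s : seq X) g :
  (forall x, dual_cone C (b x)) -> C g -> 0 <= pair (facet_form b s) g.
Proof.
move=> bC Cg; rewrite pair_facet_form; apply: sumr_ge0 => l _.
apply: mulr_ge0; last exact: psi_dual.
by apply: prodr_ge0 => x _; apply: bC; case: (xF_slice l).
Qed.

Lemma facet_form_gt0 (X : finType) (b : X -> I -> R) (s : seq X) v :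
  (forall x, dual_cone C (b x)) -> (forall x, exists i, b x i != 0) ->
  K v -> (size s < #|avoiding v|)%N -> 0 < pair (facet_form b s) v.
Proof.
move=> bC bnz Kv.
set Z := [set l | \prod_(x <- s) pair (b x) (xF l) == 0].
have cardZ := card_xF_prod_eq0 s bC bnz; rewrite -/Z => cardAv.
have /subsetPn[l lAv lZ] : ~~ (avoiding v \subset Z).
  by apply: contraTN cardAv => /subset_leq_card AvZ; rewrite -leqNgt (leq_trans AvZ).
have Cv : C v by case: Kv.
rewrite pair_facet_form (bigD1 l) //= ltr_pwDl //.
  apply: mulr_gt0; rewrite lt_def.
    by move: lZ; rewrite inE => ->; apply: prodr_ge0 => x _; apply: bC; case: (xF_slice l).
  rewrite (psi_dual l Cv) andbT; apply/eqP => psiv.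
  by move: lAv; rewrite inE => /asboolP; apply; apply/Fs_ker.
apply: sumr_ge0 => l' _; apply: mulr_ge0; last exact: psi_dual.
by apply: prodr_ge0 => x _; apply: bC; case: (xF_slice l').
Qed.

Lemma avoiding_gt_of_interior j x :
  interior_of (max_tensor (tpowC j C) (dual_cone C)) (omega j) -> K x ->
  (j.+1 < #|avoiding x|)%N.
Proof.
move=> om_int Kx; rewrite ltnNge; apply/negP => cardAv.
pose b (o : option 'I_m) := if o is Some l then psi l else phi.
have bC o : dual_cone C (b o) by case: o => [l|]; [exact: psi_dual | exact: phi_dual].
have [i xi] : exists i, x i != 0.
  by apply: (@pair_neq0 _ _ phi); case: Kx => _ ->; exact: oner_neq0.
have bnz o : exists i, b o i != 0.
  case: o => [l|]; first exact: psi_neq0.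
  by apply: (@pair_neq0 _ _ x); rewrite pairC; case: Kx => _ ->; exact: oner_neq0.
have [c cover] : exists c : tidx (option 'I_m) j, {subset Some @: avoiding x <= letters c}.
  by apply: (exists_word_covering None); rewrite card_imset //; exact: Some_inj.
have [p cp] := tensor_word_neq0 c bnz.
have Fx_dual : dual_cone (max_tensor (tpowC j C) (dual_cone C)) (tprod (tensor_word b c) x).
  move=> z z_max; apply: z_max; first exact: tensor_word_dual.
  by move=> f fC; rewrite pairC; apply: fC; case: Kx.
have := interior_dual_gt0 (j0 := (p, i)) om_int Fx_dual (mulf_neq0 cp xi).
rewrite pair_tprod_omega pair_facet_form big1 ?ltxx // => l _.
have [Flx|nFlx] := pselect (Fs l x); first by case/Fs_ker: Flx => _ ->; rewrite mulr0.
have /cover cl : Some l \in Some @: avoiding x by rewrite imset_f // inE; apply/asboolP.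
have [/Fs_ker[_ psi_xF] _] := xF_relint l.
by rewrite (big_rem _ cl) /= psi_xF !mul0r.
Qed.

Lemma interior_of_avoiding_gt j :
  (forall v, is_vertex K v -> (j.+1 < #|avoiding v|)%N) ->
  interior_of (max_tensor (tpowC j C) (dual_cone C)) (omega j).
Proof.
move=> Av_gt.
pose n (c : tidx Y j) := norm1 (tensor_word a c).
have n_gt0 c : 0 < n c by have [p cp] := tensor_word_neq0 c a_neq0; exact: norm1_gt0 cp.
(* [pair (w c) g] is [pair (tprod (tensor_word a c) g) (omega j)] scaled by [1 / n c]. *)
pose w c i := (n c)^-1 * facet_form a (letters c) i.
have [e e0 e_w] : exists2 e, 0 < e & forall c g, K g -> e <= pair (w c) g.
  apply: (uniform_vertex_bound Cproper phi_int C_poly) => c v vv.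
  rewrite pairZl mulr_gt0 ?invr_gt0 //.
  apply: facet_form_gt0 => //.
  - exact: a_dual C_poly.
  - exact: vertex_in vv.
  - by rewrite size_letters Av_gt.
have [r r0 r_phi] := phi_ge_norm1 phi_int.
apply: (interior_max_tensor (h := tensor_word a) (mulr_gt0 e0 r0)) => [f|c g g_dual].
  exact: (dual_tpowC_words C_poly (j := j)).
have Cg : C g by apply/C_poly => y; rewrite pairC; apply: g_dual; exact: a_dual.
rewrite pair_tprod_omega.
have [g0|[pg Kg]] := C_slice_cases Cproper phi_int Cg.
  have -> : norm1 g = 0 by rewrite /norm1 big1 // => i _; rewrite g0 normr0.
  rewrite !mulr0.
  by apply: facet_form_ge0 => //; exact: a_dual C_poly.
have := e_w c _ Kg; rewrite pairZl pairZ ler_pdivlMl // ler_pdivlMl // => e_g.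
apply: le_trans e_g; rewrite -/(n c).
have -> : e * r * (n c * norm1 g) = (n c * e) * (r * norm1 g) by ring.
by rewrite [pair phi g * _]mulrC ler_pM2l ?mulr_gt0 //; exact: r_phi.
Qed.

End Facets.
Arguments omega {R I m} xF psi j _.


Theorem proposition3 (R : realType) (I : finType) (C : (I -> R) -> Prop)
  (phi : I -> R) (k : nat) (m : nat) (Fs : 'I_m -> (I -> R) -> Prop)
  (xF psi : 'I_m -> I -> R) :
  polyhedral C -> proper_cone C ->
  interior_of (dual_cone C) phi ->
  (1 <= k)%N ->
  (forall l, is_facet (slice C phi) (Fs l)) ->
  (forall F, is_facet (slice C phi) F -> exists l, forall y, F y <-> Fs l y) ->
  (forall l l', (forall y, Fs l y <-> Fs l' y) -> l = l') ->
  (forall l, relint (Fs l) (xF l)) ->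
  (forall l, dual_cone C (psi l)) ->
  (forall l y, Fs l y <-> (slice C phi y /\ pair (psi l) y = 0)) ->
  interior_of (max_tensor (tpowC k.-1 C) (dual_cone C))
    (fun p : (tidx I k.-1 * I)%type =>
       \sum_(l < m) tpowv k.-1 (xF l) p.1 * psi l p.2)
  <->
  (forall x, is_vertex (slice C phi) x ->
     (k < #|[set l : 'I_m | `[< ~ Fs l x >]]|)%N).
Proof.
move=> /polyhedral_neq0[Y [a [a_neq0 C_poly]]] Cproper phi_int k_ge1 Fs_facet _ Fs_inj
  xF_relint psi_dual Fs_ker.
case: k k_ge1 => // j _ /=; split=> [om_int x xv|Av_gt].
  exact: (avoiding_gt_of_interior phi_int Fs_facet xF_relint psi_dual Fs_ker om_int
    (vertex_in xv)).
exact: (interior_of_avoiding_gt Cproper phi_int C_poly a_neq0 Fs_facet Fs_inj xF_relint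
  psi_dual Fs_ker Av_gt).
Qed.
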